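(* Let $e_1,\dots,e_n>0$ with $\sum_ie_i=1$, let $d\in\mathbb{R}_+^n$ be reported demands and $a$ the MMF allocation, and suppose $a_i<d_i$ for some agent $i$. Then, keeping all other agents' reported demands fixed, agent $i$'s MMF allocation is the same value $a_i$ for every report $d_i'\ge a_i$.
   Context: MMF$(e,d)$: set $r=1$, $E=1$, $S=\{1,\dots,n\}$, $a=0$; process agents $j$ in ascending order of $d_j/e_j$; if $d_j<re_j/E$, set $a_j=d_j$, remove $j$ from $S$, $r\leftarrow r-d_j$, $E\leftarrow E-e_j$ and continue; otherwise set $a_k=re_k/E$ for all $k\in S$ and stop; output $a$. *)

From mathcomp Require Import all_boot all_order all_algebra.
Set Implicit Arguments. Unset Strict Implicit. Unset Printing Implicit Defensive.
Import Order.TTheory GRing.Theory Num.Theory.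
Local Open Scope ring_scope.

Section MMF.
Variables (R : realFieldType) (n : nat) (e d : 'I_n -> R).

(* Processing order: ascending d_j / e_j; ties broken by agent index
   (mathcomp's [sort] is stable and [enum 'I_n] is increasing). *)
Definition mmf_order : seq 'I_n :=
  sort (fun i j => d i / e i <= d j / e j) (enum 'I_n).

(* [s] = agents still to be processed = the current set S (in processing
   order); r = remaining resource; E = remaining endowment mass; a = current
   allocation. *)
Fixpoint mmf_aux (s : seq 'I_n) (r E : R) (a : 'I_n -> R) : 'I_n -> R :=
  match s with
  | [::] => a
  | j :: s' =>
      if d j < r * e j / E then
        mmf_aux s' (r - d j) (E - e j) (fun k => if k == j then d j else a k)
      else fun k => if k \in s then r * e k / E else a k
  end.

Definition MMF : 'I_n -> R := mmf_aux mmf_order 1 1 (fun _ => 0).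
End MMF.

From mathcomp Require Import all_boot all_order all_algebra.
From mathcomp Require Import lra.
From Stdlib Require Import FunctionalExtensionality.
Set Implicit Arguments. Unset Strict Implicit. Unset Printing Implicit Defensive.
Import Order.TTheory GRing.Theory Num.Theory.
Local Open Scope ring_scope.

(* MMF is water-filling: with r resource and endowment mass E left, every
   remaining agent k is offered the share (r / E) e_k, and the agents with the
   smallest ratios d_k / e_k are satisfied first.  Satisfying an agent whose
   ratio is below the level r / E can only raise the level, so an agent i who
   ends up unsatisfied receives at least its share at every earlier stage.
   Hence if i reports any d'_i >= a_i, its ratio is never below the current
   level: both runs satisfy the same agents in the same order (the order of
   the others does not depend on d_i) and stop at the same stage, where i gets
   the same share. *)

Lemma eq_in_sort (T : Type) (P : {pred T}) (leT leT' : rel T) (s : seq T) :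
  all P s -> {in P &, leT =2 leT'} -> sort leT s = sort leT' s.
Proof.
move=> /all_sigP[t ->] eq_leT; rewrite !sort_map; congr (map _ (sort _ t)).
apply: functional_extensionality => x; apply: functional_extensionality => y.
exact: eq_leT (valP x) (valP y).
Qed.

Lemma mediant_level_le (R : realFieldType) (r E x c : R) :
  0 < E -> 0 < E - c -> x < r * c / E -> r / E <= (r - x) / (E - c).
Proof.
move=> E_gt0 Ec_gt0; rewrite ltr_pdivlMr // => xE_lt.
rewrite ler_pdivlMr // mulrAC ler_pdivrMr //; nra.
Qed.

Section WaterFilling.
Variables (R : realFieldType) (n : nat) (e : 'I_n -> R).
Hypothesis e_gt0 : forall k, 0 < e k.

Definition by_ratio (d : 'I_n -> R) : rel 'I_n :=
  fun x y => d x / e x <= d y / e y.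

Lemma by_ratio_trans d : transitive (by_ratio d).
Proof. by move=> ? ? ?; apply: le_trans. Qed.

Lemma by_ratio_total d : total (by_ratio d).
Proof. by move=> ? ?; apply: le_total. Qed.

Lemma ltr_share x r E k : (x < r * e k / E) = (x / e k < r / E).
Proof. by rewrite mulrAC ltr_pdivrMr. Qed.

Lemma ler_share x r E k : (r * e k / E <= x) = (r / E <= x / e k).
Proof. by rewrite mulrAC ler_pdivlMr. Qed.

Lemma sum_e_gt0 (s : seq 'I_n) k : k \in s -> 0 < \sum_(x <- s) e x.
Proof.
move=> ks; rewrite (big_rem k ks) /= ltr_wpDr ?sumr_ge0 // => x _.
exact: ltW.
Qed.

Lemma mmf_aux_notin d s r E a k : k \notin s -> mmf_aux e d s r E a k = a k.
Proof.
elim: s r E a => [|j s IH] r E a //=; rewrite in_cons negb_or => /andP[kj ks].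
case: ifP => _; first by rewrite IH // (negbTE kj).
by rewrite in_cons (negbTE kj) (negbTE ks).
Qed.

Lemma mmf_aux_saturated d j s r E a :
  j \notin s -> d j < r * e j / E -> mmf_aux e d (j :: s) r E a j = d j.
Proof. by move=> js /= ->; rewrite mmf_aux_notin // eqxx. Qed.

Lemma mmf_aux_share_le d s r E a k :
  uniq s -> k \in s -> E = \sum_(x <- s) e x ->
  mmf_aux e d s r E a k < d k -> r * e k / E <= mmf_aux e d s r E a k.
Proof.
elim: s r E a => [|j s IH] r E a //= /andP[js s_uniq] ks E_sum.
case: ifP => sat_j unsat; last by rewrite ks.
have kj : k != j.
  by apply: contraTneq unsat => ->; rewrite mmf_aux_notin //= eqxx ltxx.
have ks' : k \in s by move: ks; rewrite in_cons (negbTE kj).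
have E_sum' : E - e j = \sum_(x <- s) e x by rewrite E_sum big_cons addrC addKr.
apply: le_trans (IH _ _ _ s_uniq ks' E_sum' unsat).
rewrite mulrAC [(r - d j) * _ / _]mulrAC ler_pM2r //.
have E_gt0 : 0 < E by rewrite E_sum; apply: sum_e_gt0 ks.
have E'_gt0 : 0 < E - e j by rewrite E_sum'; apply: sum_e_gt0 ks'.
exact: mediant_level_le E_gt0 E'_gt0 sat_j.
Qed.

Lemma head_ratio_le d1 d2 i j s h t :
  (forall k, k != i -> d2 k = d1 k) -> h != i ->
  sorted (by_ratio d1) (j :: s) ->
  filter (predC1 i) (j :: s) = filter (predC1 i) (h :: t) ->
  d1 j / e j <= d2 h / e h.
Proof.
move=> d12 hi js_sorted same_others; rewrite d12 //.
have : h \in filter (predC1 i) (h :: t) by rewrite mem_filter /= hi mem_head.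
rewrite -same_others mem_filter in_cons => /andP[_ /predU1P[-> // | hs]].
exact: allP (order_path_min (@by_ratio_trans d1) js_sorted) h hs.
Qed.

Lemma mmf_order_uniq d : uniq (mmf_order e d).
Proof. by rewrite sort_uniq enum_uniq. Qed.

Lemma mem_mmf_order d k : k \in mmf_order e d.
Proof. by rewrite mem_sort mem_enum. Qed.

Lemma mmf_order_sorted d : sorted (by_ratio d) (mmf_order e d).
Proof. exact: (sort_sorted (by_ratio_total d) (enum 'I_n)). Qed.

Lemma big_mmf_order d (F : 'I_n -> R) :
  \sum_(k <- mmf_order e d) F k = \sum_(k < n) F k.
Proof. by apply: perm_big; rewrite perm_sort enumT. Qed.

Lemma filter_mmf_order d d' i :
  (forall k, k != i -> d' k = d k) ->
  filter (predC1 i) (mmf_order e d) = filter (predC1 i) (mmf_order e d').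
Proof.
move=> d'_off_i; rewrite !(filter_sort (by_ratio_total _) (@by_ratio_trans _)).
apply: (eq_in_sort (filter_all (predC1 i) _)) => x y xi yi.
by rewrite /by_ratio !d'_off_i.
Qed.

Section Misreport.
Variables (d d' : 'I_n -> R) (i : 'I_n).
Hypothesis d'_off_i : forall k, k != i -> d' k = d k.

Lemma mmf_aux_misreport s s' r E a :
  uniq s -> i \in s -> i \in s' ->
  sorted (by_ratio d) s -> sorted (by_ratio d') s' ->
  filter (predC1 i) s = filter (predC1 i) s' ->
  E = \sum_(x <- s) e x ->
  mmf_aux e d s r E a i < d i -> mmf_aux e d s r E a i <= d' i ->
  mmf_aux e d' s' r E a i = mmf_aux e d s r E a i.
Proof.
elim: s s' r E a => [|j s IH] [|h t] r E a //.
move=> s_uniq i_in_s i_in_t s_sorted t_sorted same_others E_sum unsat le_d'i.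
have := le_trans (mmf_aux_share_le s_uniq i_in_s E_sum unsat) le_d'i.
rewrite ler_share => share_le.
move: s_uniq => /andP[js s_uniq].
case sat_j : (d j < r * e j / E).
- have ji : j != i.
    by apply: contraTneq unsat => <-; rewrite mmf_aux_saturated // ltxx.
  have hi : h != i.
    apply: contraTneq share_le => hi; rewrite -ltNge; subst h.
    have d_off_i k : k != i -> d k = d' k by move/d'_off_i.
    have := head_ratio_le d_off_i ji t_sorted (esym same_others).
    by move/le_lt_trans; apply; rewrite -ltr_share.
  move: same_others; rewrite /= ji hi => -[hj same_others]; subst h.
  move: unsat le_d'i; rewrite /= (d'_off_i ji) sat_j => unsat le_d'i.
  have E_sum' : E - e j = \sum_(x <- s) e x by rewrite E_sum big_cons addrC addKr.
  have i_in_s' : i \in s by move: i_in_s; rewrite in_cons eq_sym (negbTE ji).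
  have i_in_t' : i \in t by move: i_in_t; rewrite in_cons eq_sym (negbTE ji).
  by apply: IH => //; apply: path_sorted; [exact: s_sorted | exact: t_sorted].
- have stop_h : ~~ (d' h < r * e h / E).
    rewrite ltr_share -leNgt; have [-> // | hi] := eqVneq h i.
    apply: le_trans (head_ratio_le d'_off_i hi s_sorted same_others).
    by rewrite leNgt -ltr_share sat_j.
  by rewrite /= (negbTE stop_h) sat_j i_in_s i_in_t.
Qed.

End Misreport.
End WaterFilling.

Theorem mainTheorem15 (R : realFieldType) (n : nat) (e d : 'I_n -> R) (i : 'I_n)
  (he_pos : forall j, 0 < e j) (he_sum : \sum_(j < n) e j = 1)
  (hd_nonneg : forall j, 0 <= d j)
  (hunsat : MMF e d i < d i) :
  forall d' : 'I_n -> R,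
    (forall j, j != i -> d' j = d j) ->
    MMF e d i <= d' i ->
    MMF e d' i = MMF e d i.
Proof.
move=> d' hd' hle.
apply: (mmf_aux_misreport he_pos hd');
  rewrite ?mmf_order_uniq ?mem_mmf_order ?big_mmf_order //.
- exact: mmf_order_sorted.
- exact: mmf_order_sorted.
- exact: filter_mmf_order.
Qed.
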